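(* Let $R$ be a ring and $N$ a right $R$-module with a filtration $(N_\alpha \mid \alpha \leq \tau)$ (for some ordinal $\tau$). Let $M$ be a finitely generated right $R$-module such that for each $\alpha < \tau$, each submodule $K$ with $N_\alpha \subseteq K \subseteq N_{\alpha+1}$, and each $f \in \mathrm{Hom}_R(M, N_{\alpha+1}/K)$, there exists $g \in \mathrm{Hom}_R(M, N_{\alpha+1})$ with $f = \pi_K g$, where $\pi_K : N_{\alpha+1} \to N_{\alpha+1}/K$ is the canonical projection. Then $M$ is $N$-projective.
   Context: A chain $(N_\alpha \mid \alpha \leq \tau)$ of submodules of $N$ is a filtration of $N$ if $\tau$ is an ordinal, $N_0 = 0$, $N_\alpha \subseteq N_{\alpha+1}$ for each $\alpha < \tau$, $N_\alpha = \bigcup_{\beta<\alpha} N_\beta$ for each limit ordinal $\alpha \leq \tau$, and $N_\tau = N$. A module $M$ is $N$-projective if for every submodule $P \subseteq N$, every homomorphism $M \to N/P$ factors through the canonical projection $N \to N/P$. *)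

(* Right R-modules are modelled as left modules over the
   converse ring R^c (scalar action  r *: m  stands for  m r). *)
From HB Require Import structures.
From mathcomp Require Import all_boot all_order all_algebra.
Set Implicit Arguments. Unset Strict Implicit. Unset Printing Implicit Defensive.
Import Order.TTheory GRing.Theory Num.Theory.
Local Open Scope ring_scope.

Section Defs.
Variable R : pzRingType.

Definition is_submodule (N : lmodType R^c) (P : N -> Prop) : Prop :=
  P 0 /\ (forall (a : R^c) (x y : N), P x -> P y -> P (a *: x + y)).

Definition fin_gen (M : lmodType R^c) : Prop :=
  exists s : seq M, forall m : M,
    exists c : 'I_(size s) -> R^c, m = \sum_(i < size s) c i *: s`_i.

(* [pi] realises the canonical projection  A -> A/K  onto Q, where A, K are
   submodules of N with K contained in A: pi is R-linear on A, maps A onto Q,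
   and its kernel on A is exactly K.  (Q is thus A/K up to the unique
   isomorphism compatible with the projection.) *)
Definition is_quotient_proj (N Q : lmodType R^c) (A K : N -> Prop)
    (pi : N -> Q) : Prop :=
  [/\ forall (a : R^c) (x y : N), A x -> A y -> pi (a *: x + y) = a *: pi x + pi y,
      (forall q : Q, exists2 x, A x & pi x = q)
    & forall x, A x -> (pi x = 0 <-> K x)].

Definition rel_projective (M N : lmodType R^c) : Prop :=
  forall (P : N -> Prop), is_submodule P ->
  forall (Q : lmodType R^c) (pi : N -> Q),
    is_quotient_proj (fun _ => True) P pi ->
  forall f : {linear M -> Q},
    exists g : {linear M -> N}, forall m, pi (g m) = f m.

(* Ordinals <= tau are modelled by a well-ordered type I with greatest
   element tau. *)
Definition well_ordered (d : Order.disp_t) (I : orderType d) : Prop :=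
  well_founded (fun a b : I => (a < b)%O).

Definition is_succ (d : Order.disp_t) (I : orderType d) (a b : I) : Prop :=
  (a < b)%O /\ ~ (exists c : I, (a < c)%O /\ (c < b)%O).

Definition is_least (d : Order.disp_t) (I : orderType d) (a : I) : Prop :=
  forall b : I, (a <= b)%O.

Definition is_limit (d : Order.disp_t) (I : orderType d) (a : I) : Prop :=
  ~ is_least a /\ ~ (exists b : I, is_succ b a).

Definition is_filtration (d : Order.disp_t) (I : orderType d) (tau : I)
    (N : lmodType R^c) (Nf : I -> N -> Prop) : Prop :=
  (forall a, is_submodule (Nf a)) /\
  [/\ forall a b : I, (a <= b)%O -> forall x, Nf a x -> Nf b x,
      forall a, is_least a -> forall x, (Nf a x <-> x = 0),
      forall a b, is_succ a b -> forall x, Nf a x -> Nf b x,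
      forall a, is_limit a -> forall x, (Nf a x <-> exists2 b, (b < a)%O & Nf b x)
    & forall x, Nf tau x].

End Defs.

(* Descending induction along the well-ordered index set.  Say that a linear
   g : M -> N lifts f modulo N_a when f - pi g takes its values in pi(N_a).
   The zero map does so modulo N_tau = N.  At a limit a, the finitely many
   generators of M already have their errors in some N_b with b < a.  At a
   successor a = b + 1, the hypothesis applied to K = N_b + (N_a meet Ker pi)
   lifts the error map M -> N_a/K to g' : M -> N_a, and g + g' lifts f modulo
   N_b.  At the least index N_a = 0, so the lift is exact; well-foundedness
   guarantees that the descent reaches it. *)
From HB Require Import structures.
From mathcomp Require Import all_boot all_order all_algebra.
From mathcomp Require Import boolp.
Set Implicit Arguments. Unset Strict Implicit. Unset Printing Implicit Defensive.
Import Order.TTheory GRing.Theory Num.Theory.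
Local Open Scope ring_scope.

Section Submodule.
Variables (R : pzRingType) (V : lmodType R^c) (A : V -> Prop).
Hypothesis hA : is_submodule A.

Lemma submod0 : A 0. Proof. by case: hA. Qed.

Lemma submodP (a : R^c) x y : A x -> A y -> A (a *: x + y).
Proof. by case: hA => _; apply. Qed.

Lemma submodD x y : A x -> A y -> A (x + y).
Proof. by move=> Ax Ay; rewrite -[x]scale1r; apply: submodP. Qed.

Lemma submodZ (a : R^c) x : A x -> A (a *: x).
Proof.
by move=> Ax; rewrite -[_ *: _]addr0; apply: submodP => //; apply: submod0.
Qed.

Lemma submodN x : A x -> A (- x).
Proof. by move=> Ax; rewrite -scaleN1r; apply: submodZ. Qed.

Lemma submodB x y : A x -> A y -> A (x - y).
Proof. by move=> Ax Ay; apply: submodD => //; apply: submodN. Qed.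

Lemma submod_sum n (c : 'I_n -> R^c) (v : 'I_n -> V) :
  (forall i, A (v i)) -> A (\sum_(i < n) c i *: v i).
Proof.
move=> Av; apply: (big_ind A) => [|x y|i _]; first exact: submod0.
  exact: submodD.
exact/submodZ/Av.
Qed.

Definition submod_pred : {pred V} := fun x => `[< A x >].

Lemma submod_pred_closed : submod_closed submod_pred.
Proof.
split=> [|a x y /asboolP Ax /asboolP Ay]; apply/asboolP; first exact: submod0.
exact: submodP.
Qed.

(* The dummy argument lets the Lmodule instance below depend on [hA]. *)
Definition submod_type of is_submodule A := {x : V | submod_pred x}.
HB.instance Definition _ :=
  SubChoice.copy (submod_type hA) {x : V | submod_pred x}.
HB.instance Definition _ :=
  GRing.SubChoice_isSubLmodule.Build _ _ _ (submod_type hA)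
    (GRing.submod_closed_semi submod_pred_closed).

End Submodule.

Section QuotientLmodule.
Local Open Scope quotient_scope.
Variables (R : pzRingType) (V : lmodType R^c) (K : V -> Prop).
Hypothesis hK : is_submodule K.

Definition eqmod_sm (u v : V) : bool := `[< K (u - v) >].

Lemma eqmod_sm_refl : reflexive eqmod_sm.
Proof. by move=> u; apply/asboolP; rewrite subrr; apply: submod0. Qed.

Lemma eqmod_sm_sym : symmetric eqmod_sm.
Proof. by move=> u v; apply/asboolP/asboolP => /(submodN hK); rewrite opprB. Qed.

Lemma eqmod_sm_trans : transitive eqmod_sm.
Proof.
move=> v u w /asboolP Kuv /asboolP Kvw; apply/asboolP.
by have := submodD hK Kuv Kvw; rewrite addrA subrK.
Qed.

Canonical eqmod_sm_equiv :=
  EquivRel eqmod_sm eqmod_sm_refl eqmod_sm_sym eqmod_sm_trans.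

Definition quot_sm := {eq_quot eqmod_sm_equiv}.
HB.instance Definition _ := Choice.on quot_sm.
HB.instance Definition _ := EqQuotient.on quot_sm.

Local Notation piq := (\pi_quot_sm).

Lemma quot_smP u v : piq u = piq v <-> K (u - v).
Proof. by split=> [/eqmodP/asboolP|Kuv]; last by apply/eqmodP/asboolP. Qed.

Lemma repr_quot_sm u : K (repr (piq u) - u).
Proof. by apply/quot_smP; rewrite reprK. Qed.

(* Locked, so that rewriting with the [_pi] lemmas below cannot unfold them. *)
Definition addq : quot_sm -> quot_sm -> quot_sm :=
  locked (fun x y => piq (repr x + repr y)).
Definition oppq : quot_sm -> quot_sm := locked (fun x => piq (- repr x)).
Definition scaleq : R^c -> quot_sm -> quot_sm :=
  locked (fun a x => piq (a *: repr x)).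

Lemma addq_pi u v : addq (piq u) (piq v) = piq (u + v).
Proof.
rewrite /addq -lock; apply/quot_smP.
by have := submodD hK (repr_quot_sm u) (repr_quot_sm v); rewrite opprD addrACA.
Qed.

Lemma scaleq_pi a u : scaleq a (piq u) = piq (a *: u).
Proof.
rewrite /scaleq -lock; apply/quot_smP.
by have := submodZ hK a (repr_quot_sm u); rewrite scalerBr.
Qed.

Lemma oppq_pi u : oppq (piq u) = piq (- u).
Proof.
rewrite /oppq -lock; apply/quot_smP.
by have := submodN hK (repr_quot_sm u); rewrite opprD.
Qed.

Lemma addqA : associative addq.
Proof.
move=> x y z; elim/quotW: x => x; elim/quotW: y => y; elim/quotW: z => z.
by rewrite !addq_pi addrA.
Qed.

Lemma addqC : commutative addq.
Proof.
by move=> x y; elim/quotW: x => x; elim/quotW: y => y; rewrite !addq_pi addrC.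
Qed.

Lemma add0q : left_id (piq 0) addq.
Proof. by elim/quotW=> ?; rewrite addq_pi add0r. Qed.

Lemma addNq : left_inverse (piq 0) oppq addq.
Proof. by elim/quotW=> ?; rewrite oppq_pi addq_pi addNr. Qed.

HB.instance Definition _ :=
  GRing.isZmodule.Build quot_sm addqA addqC add0q addNq.

Lemma quot_sm_piD u v : piq u + piq v = piq (u + v).
Proof. exact: addq_pi. Qed.

Lemma scaleqA a b x : scaleq a (scaleq b x) = scaleq (a * b) x.
Proof. by elim/quotW: x => x; rewrite !scaleq_pi scalerA. Qed.

Lemma scale1q x : scaleq 1 x = x.
Proof. by elim/quotW: x => x; rewrite scaleq_pi scale1r. Qed.

Lemma scaleqDr a x y : scaleq a (x + y) = scaleq a x + scaleq a y.
Proof.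
elim/quotW: x => x; elim/quotW: y => y.
by rewrite quot_sm_piD !scaleq_pi quot_sm_piD scalerDr.
Qed.

Lemma scaleqDl x a b : scaleq (a + b) x = scaleq a x + scaleq b x.
Proof. by elim/quotW: x => x; rewrite !scaleq_pi quot_sm_piD scalerDl. Qed.

HB.instance Definition _ :=
  GRing.Zmodule_isLmodule.Build R^c quot_sm scaleqA scale1q scaleqDr scaleqDl.

Lemma quot_sm_pi_linear (a : R^c) u v :
  piq (a *: u + v) = a *: piq u + piq v.
Proof. by rewrite -quot_sm_piD; congr (_ + _); rewrite -scaleq_pi. Qed.

Lemma quot_sm_pi_eq0 u : piq u = 0 <-> K u.
Proof. by rewrite -[u in K u]subr0; apply: quot_smP. Qed.

End QuotientLmodule.

Lemma quotient_proj_exists (R : pzRingType) (V : lmodType R^c)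
    (A K : V -> Prop) :
  is_submodule A -> is_submodule K -> (forall x, K x -> A x) ->
  exists (Q : lmodType R^c) (pi : V -> Q), is_quotient_proj A K pi.
Proof.
move=> hA hK KA; pose S := submod_type hA.
have AS (u : S) : A (val u) by move: (valP u) => /asboolP.
have insubdK x : A x -> val (insubd (0 : S) x) = x.
  by move=> Ax; apply/insubdK/asboolP.
pose KS (u : S) := K (val u).
have hKS : is_submodule KS.
  split=> [|a u v]; rewrite /KS ?linear0 ?linearP; first exact: submod0.
  exact: submodP.
pose pi x := (\pi_(quot_sm hKS) (insubd 0 x))%qT.
exists (quot_sm hKS), pi; split.
- move=> a x y Ax Ay; rewrite /pi -quot_sm_pi_linear.
  suff -> : insubd (0 : S) (a *: x + y) = a *: insubd 0 x + insubd 0 y by [].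
  by apply: val_inj; rewrite linearP /= !insubdK //; apply: submodP.
- by elim/quotW=> u; exists (val u); [exact: AS|rewrite /pi valKd].
- by move=> x Ax; rewrite /pi quot_sm_pi_eq0 /KS insubdK.
Qed.

Lemma exists_linear (R : pzRingType) (U V : lmodType R) (h : U -> V) :
  (forall a x y, h (a *: x + y) = a *: h x + h y) ->
  exists g : {linear U -> V}, g =1 h.
Proof.
move=> hP.
by exists (HB.pack_for {linear U -> V} h (GRing.isLinear.Build R U V *:%R h hP)).
Qed.

Lemma quotient_proj_eq (R : pzRingType) (V Q : lmodType R^c) (A K : V -> Prop)
    (pi : V -> Q) :
  is_submodule A -> is_quotient_proj A K pi ->
  forall x y, A x -> A y -> pi x = pi y <-> K (x - y).
Proof.
move=> hA [pi_lin _ pi_ker] x y Ax Ay.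
have Ay' : A (- y) by apply: submodN.
rewrite -pi_ker; last exact: submodB.
have -> : x - y = (-1) *: y + x by rewrite scaleN1r addrC.
rewrite pi_lin // scaleN1r addrC.
by split=> [->|/eqP]; [rewrite subrr|rewrite subr_eq0 => /eqP].
Qed.

Section SubmoduleLattice.
Variables (R : pzRingType) (V : lmodType R^c) (A B : V -> Prop).
Hypotheses (hA : is_submodule A) (hB : is_submodule B).

Definition addsm (x : V) := exists y z, [/\ A y, B z & x = y + z].
Definition capsm (x : V) := A x /\ B x.

Lemma addsm_submod : is_submodule addsm.
Proof.
split; first by exists 0, 0; rewrite addr0; split=> //; apply: submod0.
move=> a _ _ [y [z [Ay Bz ->]]] [y' [z' [Ay' Bz' ->]]].
exists (a *: y + y'), (a *: z + z'); split; try exact: submodP.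
by rewrite scalerDr addrACA.
Qed.

Lemma capsm_submod : is_submodule capsm.
Proof.
by split=> [|a x y [Ax Bx] [Ay By]]; split; apply: submod0 || apply: submodP.
Qed.

End SubmoduleLattice.

Section Filtration.
Variables (R : pzRingType) (d : Order.disp_t) (I : orderType d) (tau : I).
Variables (N : lmodType R^c) (Nf : I -> N -> Prop).
Hypothesis hNf : is_filtration tau Nf.

Lemma filtration_submod a : is_submodule (Nf a).
Proof. by case: hNf. Qed.

Lemma filtration_le a b : (a <= b)%O -> forall x, Nf a x -> Nf b x.
Proof. by case: hNf => _ [Nle _ _ _ _]; apply: Nle. Qed.

Lemma filtration_least a : is_least a -> forall x, Nf a x <-> x = 0.
Proof. by case: hNf => _ [_ Nleast _ _ _]; apply: Nleast. Qed.

Lemma filtration_top x : Nf tau x.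
Proof. by case: hNf => _ [_ _ _ _ Ntop]. Qed.

Lemma filtration_limit_seq a (s : seq N) :
  is_limit a -> (forall x, x \in s -> Nf a x) ->
  exists2 b, (b < a)%O & forall x, x \in s -> Nf b x.
Proof.
case: hNf => _ [_ _ _ Nlim _] lim_a; elim: s => [_|x s IHs s_in_a].
  have [c /negP] := (existsNP _).2 lim_a.1.
  by rewrite -ltNge => ca; exists c.
have [c ca x_in_c] := (Nlim a lim_a x).1 (s_in_a x (mem_head x s)).
have [b ba s_in_b] : exists2 b, (b < a)%O & forall y, y \in s -> Nf b y.
  by apply: IHs => y ys; apply: s_in_a; rewrite in_cons ys orbT.
exists (Order.join b c); first by rewrite ltUx ba ca.
move=> y; rewrite in_cons => /predU1P[->|ys].
  exact: filtration_le (leUr c b) _ x_in_c.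
exact: filtration_le (leUl b c) _ (s_in_b y ys).
Qed.

End Filtration.

Section LiftAlongFiltration.
Variables (R : pzRingType) (d : Order.disp_t) (I : orderType d) (tau : I).
Variables (N M Q : lmodType R^c) (Nf : I -> N -> Prop).
Variables (pi : {linear N -> Q}) (f : {linear M -> Q}).
Hypotheses (wf : well_ordered I) (tau_max : forall a : I, (a <= tau)%O).
Hypotheses (hNf : is_filtration tau Nf) (hM : fin_gen M).
Hypothesis pi_surj : forall q, exists x, pi x = q.
Hypothesis lift_succ : forall a a1 : I, (a < tau)%O -> is_succ a a1 ->
  forall K : N -> Prop, is_submodule K ->
    (forall x, Nf a x -> K x) -> (forall x, K x -> Nf a1 x) ->
  forall (Q' : lmodType R^c) (pi' : N -> Q'), is_quotient_proj (Nf a1) K pi' ->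
  forall f' : {linear M -> Q'},
    exists g : {linear M -> N}, forall m, Nf a1 (g m) /\ pi' (g m) = f' m.

Definition lifts_modulo (a : I) :=
  exists g : {linear M -> N}, forall m, exists2 x, Nf a x & pi (g m + x) = f m.

Lemma lifts_modulo_top : lifts_modulo tau.
Proof.
have [g0 g0E] : exists g : {linear M -> N}, g =1 fun=> 0.
  by apply: exists_linear => a x y; rewrite scaler0 addr0.
exists g0 => m; have [x pix] := pi_surj (f m).
by exists x; [apply: filtration_top hNf x|rewrite g0E add0r].
Qed.

Lemma lifts_modulo_reps a : lifts_modulo a ->
  exists g : {linear M -> N}, exists xs : M -> N,
    forall m, Nf a (xs m) /\ pi (xs m) = f m - pi (g m).
Proof.
case=> g lift_g; exists g.
have /choice [xs Hxs] : forall m, exists x, Nf a x /\ pi (g m + x) = f m.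
  by move=> m; have [x Nx pix] := lift_g m; exists x.
exists xs => m; have [Nx pix] := Hxs m.
by split=> //; rewrite -pix linearD addrC addKr.
Qed.

Lemma lifts_modulo_least a : is_least a -> lifts_modulo a ->
  exists g : {linear M -> N}, forall m, pi (g m) = f m.
Proof.
move=> least_a [g lift_g]; exists g => m.
have [x /(filtration_least hNf least_a) -> <-] := lift_g m.
by rewrite addr0.
Qed.

Lemma lifts_modulo_limit a : is_limit a -> lifts_modulo a ->
  exists2 b, (b < a)%O & lifts_modulo b.
Proof.
move=> lim_a /lifts_modulo_reps [g [xs Hxs]]; have [s span_s] := hM.
have [b ba xs_in_b] : exists2 b, (b < a)%O & forall x, x \in map xs s -> Nf b x.
  apply: filtration_limit_seq hNf _ _ lim_a _ => _ /mapP[m _ ->].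
  exact: (Hxs m).1.
exists b => //; exists g => m; have [c ->] := span_s m.
exists (\sum_(i < size s) c i *: xs s`_i).
  apply: (submod_sum (filtration_submod hNf b)) => i.
  by apply: xs_in_b; apply: map_f; apply: mem_nth.
rewrite linear_sum -big_split !linear_sum; apply: eq_bigr => i _ /=.
by rewrite linearZ -scalerDr !linearZ linearD (Hxs _).2 addrC subrK.
Qed.

Lemma lifts_modulo_succ b a : (b < tau)%O -> is_succ b a ->
  lifts_modulo a -> lifts_modulo b.
Proof.
move=> btau succ_ba /lifts_modulo_reps [g [xs Hxs]].
have Na := filtration_submod hNf a; have Nb := filtration_submod hNf b.
have hker : is_submodule (fun x => pi x = 0).
  split=> [|r x y]; rewrite ?linear0 // linearP => -> ->.
  by rewrite scaler0 addr0.
pose K := addsm (Nf b) (capsm (fun x => pi x = 0) (Nf a)).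
have hK : is_submodule K := addsm_submod Nb (capsm_submod hker Na).
have NbK x : Nf b x -> K x.
  exists x, 0; rewrite addr0; split=> //.
  by split; [exact: linear0|exact: submod0].
have KNa x : K x -> Nf a x.
  case=> y [z [Ny [_ Nz] ->]]; apply: submodD => //.
  exact: (filtration_le hNf (ltW succ_ba.1)) Ny.
have K_of_pi_eq x y : Nf a x -> Nf a y -> pi x = pi y -> K (x - y).
  move=> Nx Ny pixy; exists 0, (x - y); rewrite add0r.
  split=> //; first exact: submod0.
  by split; [rewrite linearB pixy subrr|apply: submodB].
have [Q' [pi' pi'_proj]] := quotient_proj_exists Na hK KNa.
have pi'_eq := quotient_proj_eq Na pi'_proj.
have [h hE] : exists h : {linear M -> Q'}, h =1 pi' \o xs.
  apply: exists_linear => r m m' /=; case: pi'_proj => pi'_lin _ _.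
  have Nxs m'' : Nf a (xs m'') := (Hxs m'').1.
  rewrite -pi'_lin //; apply/pi'_eq/K_of_pi_eq => //; try exact: submodP.
  rewrite linearP !(Hxs _).2 [f _]linearP [g _]linearP [pi (_ + _)]linearP.
  by rewrite scalerBr opprD addrACA.
have [g' lift_g'] := lift_succ btau succ_ba hK NbK KNa pi'_proj h.
exists (g \+ g') => m; have [Ng' pi'g'] := lift_g' m.
have [y [p [Ny [pip _] xs_g']]] : K (xs m - g' m).
  by apply/(pi'_eq _ _ (Hxs m).1 Ng'); rewrite pi'g' hE.
exists y => //.
have g'_y : g' m + y = xs m - p.
  by rewrite -[xs m](subrK (g' m)) xs_g' addrAC addrK addrC.
by rewrite /= -addrA g'_y linearD linearB pip subr0 (Hxs m).2 addrC subrK.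
Qed.

Lemma lifts_modulo_lift a : lifts_modulo a ->
  exists g : {linear M -> N}, forall m, pi (g m) = f m.
Proof.
elim/(well_founded_ind wf): a => a IH lift_a.
have [least_a|not_least] := EM (is_least a); first exact: lifts_modulo_least.
have [[b succ_ba]|not_succ] := EM (exists b, is_succ b a).
  apply: (IH b succ_ba.1 (lifts_modulo_succ _ succ_ba lift_a)).
  exact: lt_le_trans succ_ba.1 (tau_max a).
have [b ba lift_b] := lifts_modulo_limit (conj not_least not_succ) lift_a.
exact: IH b ba lift_b.
Qed.

End LiftAlongFiltration.

Unset Implicit Arguments. Set Strict Implicit.
Theorem lemma1p5 (R : pzRingType) (d : Order.disp_t) (I : orderType d)
    (tau : I) (N M : lmodType R^c) (Nf : I -> N -> Prop) :
  well_ordered I ->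
  (forall a : I, (a <= tau)%O) ->
  is_filtration tau Nf ->
  fin_gen M ->
  (forall a a1 : I, (a < tau)%O -> is_succ a a1 ->
   forall K : N -> Prop, is_submodule K ->
     (forall x, Nf a x -> K x) -> (forall x, K x -> Nf a1 x) ->
   forall (Q : lmodType R^c) (pi : N -> Q), is_quotient_proj (Nf a1) K pi ->
   forall f : {linear M -> Q},
     exists g : {linear M -> N}, forall m, Nf a1 (g m) /\ pi (g m) = f m) ->
  rel_projective M N.
Proof.
move=> wf tau_max hNf hM lift_succ P _ Q pi0 [pi0_lin pi0_surj _] f.
have [pi piE] : exists pi : {linear N -> Q}, pi =1 pi0.
  by apply: exists_linear => a x y; apply: pi0_lin.
have pi_surj q : exists x, pi x = q.
  by have [x _ <-] := pi0_surj q; exists x; rewrite piE.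
have [g lift_g] := lifts_modulo_lift wf tau_max hNf hM lift_succ
  (lifts_modulo_top f hNf pi_surj).
by exists g => m; rewrite -piE lift_g.
Qed.
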